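(* Let $X$ be a metrizable vector space over $K$ with metric $d_X$, and let $Y$ be a Banach space over $K$ with $d_Y$ the metric induced by its norm. Then $B_d(X,Y)$ is a Banach space with norm $\|F\|_{B_d(X,Y)}=d(F,0)$.
   Context: $K$ is $\mathbb{R}$ or $\mathbb{C}$. For maps $F_1,F_2:X\to Y$, $d(F_1,F_2)=\max\left\{\sup_{x\neq0,x\in X}\frac{\|F_1(x)-F_2(x)\|_Y}{d_X(x,0)},\ \|F_1(0)-F_2(0)\|_Y\right\}\in[0,\infty]$, and $B_d(X,Y)$ is the set of maps $F:X\to Y$ with $d(F,0)<\infty$, with pointwise vector operations. *)

From HB Require Import structures.
From mathcomp Require Import all_boot all_order all_algebra.
From mathcomp Require Import all_classical all_reals all_analysis.
From mathcomp Require Export complex.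
Set Implicit Arguments. Unset Strict Implicit. Unset Printing Implicit Defensive.
Import Order.TTheory GRing.Theory Num.Theory.
Import numFieldNormedType.Exports.
Local Open Scope classical_set_scope.
Local Open Scope ring_scope.

Section Defs.
Variable R : realType.

Definition is_metric (T : Type) (d : T -> T -> R) : Prop :=
  (forall x y, d x y = 0 <-> x = y) /\
  (forall x y, d x y = d y x) /\
  (forall x y z, d x z <= d x y + d y z).

Definition metric_induces_topology (T : topologicalType) (d : T -> T -> R)
  : Prop :=
  forall (x : T) (A : set T),
    nbhs x A <-> exists2 e : R, 0 < e & forall y, d x y < e -> A y.

Variable K : numFieldType.
(** [nK] reads the (real) value of a norm [`|_| : K] as an element of [R]:
    the identity when K = R, the real part when K = R[i]. *)
Variable nK : K -> R.
Variables (X : lmodType K) (Y : normedModType K) (dX : X -> X -> R).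

Definition dmap (F1 F2 : X -> Y) : \bar R :=
  maxe (ereal_sup [set ((nK `|F1 x - F2 x|) / dX x 0)%:E | x in [set x : X | x != 0]])
       (nK `|F1 0 - F2 0|)%:E.

Definition Bd : set (X -> Y) := [set F | (dmap F (fun _ => 0%R) < +oo)%E].

Definition Bd_norm (F : X -> Y) : R := fine (dmap F (fun _ => 0)).

Definition Bd_is_Banach : Prop :=
  [/\ Bd (fun _ => 0),
      (forall F G, Bd F -> Bd G -> Bd (fun x => F x + G x)) &
      (forall (a : K) F, Bd F -> Bd (fun x => a *: F x))] /\
  [/\ (forall F, Bd F -> 0 <= Bd_norm F),
      (forall F, Bd F -> (Bd_norm F = 0 <-> F = (fun _ => 0))),
      (forall (a : K) F, Bd F -> Bd_norm (fun x => a *: F x) = nK `|a| * Bd_norm F) &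
      (forall F G, Bd F -> Bd G ->
         Bd_norm (fun x => F x + G x) <= Bd_norm F + Bd_norm G)] /\
  (forall u : nat -> X -> Y, (forall n, Bd (u n)) ->
     (forall e : R, 0 < e -> exists N, forall m n, (N <= m)%N -> (N <= n)%N ->
         Bd_norm (fun x => u m x - u n x) < e) ->
     exists2 F, Bd F & (fun n => Bd_norm (fun x => u n x - F x)) @ \oo --> (0 : R)).
End Defs.
Arguments Bd_is_Banach {R K} nK X Y dX.

(** A map F lies in B_d(X,Y) with d(F,0) <= M exactly when ||F x|| <= M w(x) for
    all x, where w(x) = d_X(x,0) for x <> 0 and w(0) = 1; so d(F,0) is the best
    constant in a weighted sup-norm, and all norm axioms follow pointwise.
    Completeness is the usual argument for weighted sup-norms: a Cauchy sequence
    in B_d(X,Y) is pointwise Cauchy in Y, its pointwise limit F inherits the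
    weighted bounds, and these bounds say precisely that the sequence converges
    to F in B_d(X,Y). *)
From HB Require Import structures.
From mathcomp Require Import all_boot all_order all_algebra.
From mathcomp Require Import all_classical all_reals all_analysis.
From mathcomp Require Import complex lra.
Import Order.TTheory GRing.Theory Num.Theory.
Import numFieldNormedType.Exports.
Local Open Scope classical_set_scope.
Local Open Scope ring_scope.

Set Implicit Arguments.
Unset Strict Implicit.

Lemma metric_gt0 (R : realType) (T : Type) (d : T -> T -> R) (x y : T) :
  is_metric d -> x <> y -> 0 < d x y.
Proof.
move=> [d_eq0 [d_sym d_tri]] xy.
have dxx : d x x = 0 by apply/d_eq0.
have : d x x <= d x y + d y x := d_tri x y x.
rewrite dxx (d_sym y x) => d_ge0.
rewrite lt_neqAle; apply/andP; split; last by lra.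
by apply/eqP => /esym /d_eq0.
Qed.

Section WeightedSupNorm.
Variables (R : realType) (K : numFieldType) (nK : K -> R).
Variables (X : lmodType K) (Y : normedModType K) (dX : X -> X -> R).
Hypothesis dX_metric : is_metric dX.

Local Notation ny y := (nK `|y|).
Hypotheses (ny_ge0 : forall y : Y, 0 <= ny y)
  (ny_eq0 : forall y : Y, ny y = 0 -> y = 0)
  (nyD : forall y z : Y, ny (y + z) <= ny y + ny z)
  (nyN : forall y : Y, ny (- y) = ny y)
  (nyZ : forall (a : K) (y : Y), ny (a *: y) = nK `|a| * ny y)
  (nK0 : nK 0 = 0)
  (nK_norm_ge0 : forall a : K, 0 <= nK `|a|).
Hypothesis ny_complete : forall u : nat -> Y,
  (forall e, 0 < e -> exists N, forall m n, (N <= m)%N -> (N <= n)%N ->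
     ny (u m - u n) < e) ->
  exists l, forall e, 0 < e -> exists N, forall n, (N <= n)%N -> ny (u n - l) < e.

Local Notation B := (Bd nK dX).
Local Notation NB := (Bd_norm nK dX).
Local Notation d0 F := (dmap nK dX F (fun _ => 0)).

(* The weight 1 at the origin accounts for the term ||F 0|| in [dmap]. *)
Definition weight (x : X) : R := if x == 0 then 1 else dX x 0.

Lemma weight_gt0 x : 0 < weight x.
Proof.
by rewrite /weight; case: eqP => [_|x0]; [exact: ltr01|exact: metric_gt0].
Qed.

Lemma dmap0_ge_norm_at0 (F : X -> Y) : ((ny (F 0))%:E <= d0 F)%E.
Proof. by rewrite /dmap le_max subr0 lexx orbT. Qed.

Lemma Bd_normE (F : X -> Y) : B F -> (NB F)%:E = d0 F.
Proof.
move=> BF; apply: fineK; apply/fin_numPlt; rewrite BF andbT.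
exact: lt_le_trans (ltNyr _) (dmap0_ge_norm_at0 F).
Qed.

Lemma ny_le_Bd_norm (F : X -> Y) x : B F -> ny (F x) <= NB F * weight x.
Proof.
move=> BF; rewrite /weight; have := Bd_normE BF.
case: eqP => [-> | x0] NE.
  by rewrite mulr1 -lee_fin NE; exact: dmap0_ge_norm_at0.
rewrite -ler_pdivrMr; last exact: metric_gt0.
rewrite -lee_fin NE /dmap le_max; apply/orP; left.
by apply: ereal_sup_ubound; exists x; [exact/eqP|rewrite subr0].
Qed.

Section Bounded.
Variables (F : X -> Y) (M : R).
Hypothesis F_bounded : forall x, ny (F x) <= M * weight x.

Lemma dmap0_le : (d0 F <= M%:E)%E.
Proof.
rewrite /dmap ge_max; apply/andP; split; last first.
  by rewrite lee_fin subr0; have := F_bounded 0; rewrite /weight eqxx mulr1.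
apply: ge_ereal_sup => _ [x x0 <-].
rewrite lee_fin subr0 ler_pdivrMr; last exact/metric_gt0/eqP.
by have := F_bounded x; rewrite /weight (negbTE x0).
Qed.

Lemma Bd_bounded : B F.
Proof. exact: le_lt_trans dmap0_le (ltry _). Qed.

Lemma Bd_norm_le : NB F <= M.
Proof. by rewrite -lee_fin Bd_normE; [exact: dmap0_le|exact: Bd_bounded]. Qed.

End Bounded.

Lemma Bd_norm_ge0 (F : X -> Y) : B F -> 0 <= NB F.
Proof.
move=> BF; have := ny_le_Bd_norm 0 BF; rewrite /weight eqxx mulr1.
exact: le_trans.
Qed.

Lemma Bd_bounded_D (F G : X -> Y) : B F -> B G ->
  forall x, ny (F x + G x) <= (NB F + NB G) * weight x.
Proof.
by move=> BF BG x; rewrite mulrDl; apply: le_trans (nyD _ _) _;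
   apply: lerD; exact: ny_le_Bd_norm.
Qed.

Lemma Bd_bounded_Z (a : K) (F : X -> Y) : B F ->
  forall x, ny (a *: F x) <= nK `|a| * NB F * weight x.
Proof. by move=> BF x; rewrite nyZ -mulrA ler_wpM2l // ny_le_Bd_norm. Qed.

Lemma Bd0 : B (fun _ : X => 0 : Y).
Proof. by apply: (@Bd_bounded _ 0) => x; rewrite normr0 nK0 mul0r. Qed.

Lemma BdD (F G : X -> Y) : B F -> B G -> B (fun x => F x + G x).
Proof. by move=> BF BG; apply: Bd_bounded; exact: Bd_bounded_D. Qed.

Lemma BdZ (a : K) (F : X -> Y) : B F -> B (fun x => a *: F x).
Proof. by move=> BF; apply: Bd_bounded; exact: Bd_bounded_Z. Qed.

Lemma BdN (F : X -> Y) : B F -> B (fun x => - F x).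
Proof.
by move=> BF; apply: (@Bd_bounded _ (NB F)) => x; rewrite nyN ny_le_Bd_norm.
Qed.

Lemma BdB (F G : X -> Y) : B F -> B G -> B (fun x => F x - G x).
Proof. by move=> BF BG; apply: BdD => //; exact: BdN. Qed.

Lemma Bd_norm_eq0 (F : X -> Y) : B F -> NB F = 0 <-> F = (fun _ => 0).
Proof.
move=> BF; split; last first.
  move=> ->; apply: le_anti; rewrite (Bd_norm_ge0 Bd0) andbT.
  by apply: Bd_norm_le => x; rewrite normr0 nK0 mul0r.
move=> NF0; apply: funext => x; apply: ny_eq0; apply: le_anti.
by rewrite ny_ge0 andbT; have := ny_le_Bd_norm x BF; rewrite NF0 mul0r.
Qed.

Lemma Bd_normZ (a : K) (F : X -> Y) : B F ->
  NB (fun x => a *: F x) = nK `|a| * NB F.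
Proof.
move=> BF; have BaF := BdZ a BF.
apply: le_anti; rewrite (Bd_norm_le (Bd_bounded_Z a BF)) /=.
have [a0|a0] := eqVneq (nK `|a|) 0; first by rewrite a0 mul0r Bd_norm_ge0.
have a_gt0 : 0 < nK `|a| by rewrite lt_neqAle eq_sym a0 nK_norm_ge0.
rewrite -ler_pdivlMl //; apply: Bd_norm_le => x.
by rewrite -mulrA ler_pdivlMl // -nyZ ny_le_Bd_norm.
Qed.

Lemma ler_Bd_normD (F G : X -> Y) : B F -> B G ->
  NB (fun x => F x + G x) <= NB F + NB G.
Proof. by move=> BF BG; apply: Bd_norm_le; exact: Bd_bounded_D. Qed.

Section Completeness.
Variable u : nat -> X -> Y.
Hypothesis u_Bd : forall n, B (u n).
Hypothesis u_cauchy : forall e, 0 < e -> exists N, forall m n,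
  (N <= m)%N -> (N <= n)%N -> NB (fun x => u m x - u n x) < e.

Lemma ny_le_Bd_norm_sub m n x :
  ny (u m x - u n x) <= NB (fun x => u m x - u n x) * weight x.
Proof. by apply: ny_le_Bd_norm; exact: BdB. Qed.

Lemma pointwise_limit x :
  exists l, forall e, 0 < e ->
    exists N, forall n, (N <= n)%N -> ny (u n x - l) < e.
Proof.
apply: ny_complete => e e0.
have [N uN] := u_cauchy (divr_gt0 e0 (weight_gt0 x)).
exists N => m n Nm Nn; apply: le_lt_trans (ny_le_Bd_norm_sub m n x) _.
by rewrite -ltr_pdivlMr ?weight_gt0 // uN.
Qed.

Lemma weighted_uniform_limit : exists F : X -> Y, forall e, 0 < e ->
  exists N, forall m, (N <= m)%N -> forall x, ny (u m x - F x) <= e * weight x.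
Proof.
have [F uF] := choice pointwise_limit.
exists F => e e0; have [N uN] := u_cauchy e0.
exists N => m Nm x; apply/ler_addgt0Pr => r r0.
have [N' uN'] := uF x r r0; pose n := maxn N N'.
rewrite -(subrK (u n x) (u m x)) -addrA.
apply: le_trans (nyD _ _) _; apply: lerD; last by rewrite ltW // uN' ?leq_maxr.
apply: le_trans (ny_le_Bd_norm_sub m n x) _.
by rewrite ler_pM2r ?weight_gt0 // ltW // uN ?leq_maxl.
Qed.

Lemma Bd_complete : exists2 F, B F &
  (fun n => NB (fun x => u n x - F x)) @ \oo --> (0 : R).
Proof.
have [F uF] := weighted_uniform_limit.
have BF : B F.
  have [N uN] := uF 1 ltr01.
  apply: (@Bd_bounded _ (NB (u N) + 1)) => x.
  rewrite -[F x](subKr (u N x)) mulrDl.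
  apply: le_trans (nyD _ _) _; rewrite nyN.
  by apply: lerD; [exact: ny_le_Bd_norm|exact: uN].
exists F => //; apply/cvgrPdist_lt => e e0.
have [N uN] := uF (e / 2) (divr_gt0 e0 (ltr0Sn _ 1)).
exists N => // n /= Nn.
rewrite sub0r normrN ger0_norm; last exact/Bd_norm_ge0/BdB.
by apply: le_lt_trans (Bd_norm_le (uN n Nn)) _; lra.
Qed.

End Completeness.

Theorem Bd_is_Banach_of_complete_norm : Bd_is_Banach nK X Y dX.
Proof.
split; [|split].
- by split; [exact: Bd0|exact: BdD|exact: BdZ].
- split; [exact: Bd_norm_ge0|exact: Bd_norm_eq0|exact: Bd_normZ|].
  exact: ler_Bd_normD.
- by move=> u u_Bd u_cauchy; exact: Bd_complete.
Qed.

End WeightedSupNorm.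

Lemma normed_cauchy_seq_cvg (K : numFieldType) (Y : completeNormedModType K)
    (u : nat -> Y) :
  (forall e : K, 0 < e -> exists N, forall m n, (N <= m)%N -> (N <= n)%N ->
     `|u m - u n| < e) ->
  exists l, forall e : K, 0 < e ->
    exists N, forall n, (N <= n)%N -> `|u n - l| < e.
Proof.
move=> u_cauchy.
have : cauchy (u @ \oo).
  apply: cauchy_exP => e e0; have [N uN] := u_cauchy e e0.
  exists (u N), N => // n /= Nn; rewrite -ball_normE /=; exact: uN.
move/cauchy_cvgP => u_cvg; exists (lim (u @ \oo)) => e e0.
by have [N _ uN] := (cvgrPdistC_lt _ _).1 u_cvg e e0; exists N.
Qed.

Section ComplexNorm.
Variable R : rcfType.
Local Open Scope complex_scope.

Lemma ger0_RRe (z : R[i]) : 0 <= z -> z = (complex.Re z)%:C.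
Proof. by move=> /ger0_Im; case: z => a b /= ->. Qed.

Lemma ger0_Re (z : R[i]) : 0 <= z -> 0 <= complex.Re z.
Proof. by rewrite lecE => /andP[]. Qed.

Lemma Re_norm_eq0 (Y : normedModType R[i]) (y : Y) :
  complex.Re `|y| = 0 -> y = 0.
Proof. by move=> y0; apply/normr0_eq0; rewrite (ger0_RRe (normr_ge0 y)) y0. Qed.

Lemma ler_Re_normD (Y : normedModType R[i]) (y z : Y) :
  complex.Re `|y + z| <= complex.Re `|y| + complex.Re `|z|.
Proof. by have := ler_normD y z; rewrite lecE => /andP[_]; rewrite raddfD. Qed.

Lemma Re_normZ (Y : normedModType R[i]) (a : R[i]) (y : Y) :
  complex.Re `|a *: y| = complex.Re `|a| * complex.Re `|y|.
Proof.
by rewrite normrZ (ger0_RRe (normr_ge0 a)) (ger0_RRe (normr_ge0 y)) -rmorphM.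
Qed.

Lemma Re_normed_cauchy_seq_cvg (Y : completeNormedModType R[i]) (u : nat -> Y) :
  (forall e : R, 0 < e -> exists N, forall m n, (N <= m)%N -> (N <= n)%N ->
     complex.Re `|u m - u n| < e) ->
  exists l, forall e : R, 0 < e -> exists N, forall n, (N <= n)%N ->
    complex.Re `|u n - l| < e.
Proof.
move=> u_cauchy.
have [|l ul] := normed_cauchy_seq_cvg (u := u).
  move=> e; rewrite ltcE => /andP[/eqP e_real /u_cauchy[N uN]].
  exists N => m n Nm Nn; rewrite ltcE uN // andbT e_real.
  by rewrite (ger0_Im (normr_ge0 _)).
exists l => e e0; have [|N uN] := ul e%:C; first by rewrite ltcR.
by exists N => n Nn; move: (uN n Nn); rewrite ltcE => /andP[].
Qed.

End ComplexNorm.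

Lemma Bd_is_Banach_real (R : realType) (X : lmodType R) (dX : X -> X -> R)
    (Y : completeNormedModType R) :
  is_metric dX -> Bd_is_Banach (fun r : R => r) X Y dX.
Proof.
move=> dX_metric; apply: Bd_is_Banach_of_complete_norm dX_metric _ _ _ _ _ _ _ _.
- exact: normr_ge0.
- by move=> y /normr0_eq0.
- exact: ler_normD.
- exact: normrN.
- exact: normrZ.
- by [].
- exact: normr_ge0.
- exact: normed_cauchy_seq_cvg.
Qed.

Lemma Bd_is_Banach_complex (R : realType) (X : lmodType R[i]) (dX : X -> X -> R)
    (Y : completeNormedModType R[i]) :
  is_metric dX -> Bd_is_Banach (@complex.Re R) X Y dX.
Proof.
move=> dX_metric; apply: Bd_is_Banach_of_complete_norm dX_metric _ _ _ _ _ _ _ _.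
- by move=> y; exact: ger0_Re.
- exact: Re_norm_eq0.
- exact: ler_Re_normD.
- by move=> y; rewrite normrN.
- exact: Re_normZ.
- by [].
- by move=> a; exact: ger0_Re.
- exact: Re_normed_cauchy_seq_cvg.
Qed.

Theorem corollary11 (R : realType) :
  (forall (X : topologicalLmodType R) (dX : X -> X -> R)
          (Y : completeNormedModType R),
     is_metric dX -> metric_induces_topology dX ->
     Bd_is_Banach (fun r : R => r) X Y dX) /\
  (forall (X : topologicalLmodType R[i]) (dX : X -> X -> R)
          (Y : completeNormedModType R[i]),
     is_metric dX -> metric_induces_topology dX ->
     Bd_is_Banach (@complex.Re R) X Y dX).
Proof.
split => X dX Y dX_metric _; first exact: Bd_is_Banach_real.
exact: Bd_is_Banach_complex.
Qed.
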